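(* For every $r\geq 2$, there exist $c_1,C>0$ such that the following holds. Let $H$ be an $r$-uniform hypergraph on $n$ vertices of average degree $d$. Let $X\subset V(H)$ be such that every vertex in $X$ has degree at least $Cd$. Then $\mathrm{disc}^{+}(H)\geq c_1|\partial(X)|$.
   Context: $\partial(X)$ denotes the set of edges of $H$ having at least one vertex in $X$. The average degree is $d=r|E(H)|/n$. With edge density $p=|E(H)|/\binom{n}{r}$ and $e(U)$ the number of edges contained in $U\subset V(H)$, $\mathrm{disc}(U)=e(U)-p\binom{|U|}{r}$ and $\mathrm{disc}^{+}(H)=\max_{U\subset V(H)}\mathrm{disc}(U)$. *)

From mathcomp Require Import all_boot all_order all_algebra.
Set Implicit Arguments. Unset Strict Implicit. Unset Printing Implicit Defensive.
Import Order.TTheory GRing.Theory Num.Theory.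
Local Open Scope ring_scope.

(* An r-uniform hypergraph on vertex set T (a finite type, n = #|T|) is given
   by its edge set E : {set {set T}}, each edge having exactly r vertices. *)
Definition uniform (T : finType) (r : nat) (E : {set {set T}}) : Prop :=
  forall e, e \in E -> #|e| = r.

Definition deg (T : finType) (E : {set {set T}}) (x : T) : nat :=
  #|[set e in E | x \in e]|.

Definition avg_deg (T : finType) (r : nat) (E : {set {set T}}) : rat :=
  (r * #|E|)%:R / (#|T|)%:R.

Definition boundary (T : finType) (E : {set {set T}}) (X : {set T}) : {set {set T}} :=
  [set e in E | ~~ [disjoint e & X]].

Definition density (T : finType) (r : nat) (E : {set {set T}}) : rat :=
  (#|E|)%:R / ('C(#|T|, r))%:R.

Definition e_in (T : finType) (E : {set {set T}}) (U : {set T}) : nat :=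
  #|[set e in E | e \subset U]|.

Definition disc (T : finType) (r : nat) (E : {set {set T}}) (U : {set T}) : rat :=
  (e_in E U)%:R - density r E * ('C(#|U|, r))%:R.

(* disc^+(H) = max over all U of disc(U).  The max is taken with neutral
   element 0; since U = set0 is among the indices and disc(set0) = 0 for
   r >= 1, this is exactly the maximum over all U. *)
Definition disc_plus (T : finType) (r : nat) (E : {set {set T}}) : rat :=
  \big[Num.max/0]_(U : {set T}) disc r E U.

(* Average disc(X :|: W) over all W disjoint from X.  An r-set S lies in
   X :|: W for a fraction 2^(|S :&: X| - r) of these W, so edges meeting X
   carry weight at least 2^(1-r) and the other edges weight 2^-r, whereas the
   expected value of p * 'C(|X :|: W|, r) is at most 2^-r * p * 'C(n, r) = 2^-r |E|
   plus p * |X| * 'C(n-1, r-1) = d |X|.  Hence 2^r disc^+ >= |boundary X| - 2^r d |X|,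
   and summing the degree condition over X bounds C d |X| by r |boundary X|;
   C = r 2^(r+1) then leaves disc^+ >= 2^-(r+1) |boundary X|. *)

From mathcomp Require Import all_boot all_order all_algebra.
From mathcomp Require Import ring lra.
Set Implicit Arguments.
Unset Strict Implicit.
Unset Printing Implicit Defensive.

Import Order.TTheory GRing.Theory Num.Theory.

Section Counting.
Variable T : finType.
Implicit Types (A B S V W X : {set T}) (G : {set {set T}}).

Lemma card_set_sum (I : finType) (A : {pred I}) (P : pred I) :
  #|[set x in A | P x]| = \sum_(x in A) P x.
Proof.
rewrite -sum1_card big_mkcond [RHS]big_mkcond; apply: eq_bigr => x _.
by rewrite inE; case: (x \in A); case: (P x).
Qed.

Lemma card_supersets A B : B \subset A ->
  #|[set W in powerset A | B \subset W]| = 2 ^ (#|A| - #|B|).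
Proof.
move=> sBA; have -> : (#|A| - #|B| = #|A :\: B|)%N by rewrite cardsD (setIidPr sBA).
rewrite -card_powerset.
have injU : {in powerset (A :\: B) &, injective (setU B)}.
  move=> V1 V2; rewrite !inE => sV1 sV2 /(congr1 (fun V => V :\: B)).
  rewrite !setDUl setDv !set0U.
  have disjB V : V \subset A :\: B -> V :\: B = V.
    by case/subsetDP=> _ /setDidPl.
  by rewrite (disjB V1) // (disjB V2).
rewrite -(card_in_imset injU); apply: eq_card => W; rewrite !inE.
apply/andP/imsetP => [[sWA sBW] | [V + ->]].
  exists (W :\: B); first by rewrite inE setSD.
  by rewrite setDE setUIr setUCr setIT (setUidPr sBW).
by rewrite inE subUset sBA subsetUl => sV; rewrite (subset_trans sV) ?subsetDl.
Qed.

Lemma sum_card_subsets_setU X G :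
  \sum_(W in powerset (~: X)) #|[set S in G | S \subset X :|: W]|
  = \sum_(S in G) 2 ^ (#|~: X| - #|S :\: X|).
Proof.
under eq_bigr => W _ do rewrite card_set_sum.
rewrite exchange_big; apply: eq_bigr => S _.
rewrite -card_set_sum -card_supersets; last by rewrite setDE subsetIr.
by apply: eq_card => W; rewrite !inE subDset.
Qed.

Lemma sum_card_subsets_setU_uniform r X G : uniform r G ->
  (2 ^ r * \sum_(W in powerset (~: X)) #|[set S in G | S \subset X :|: W]|
   = 2 ^ #|~: X| * \sum_(S in G) 2 ^ #|S :&: X|)%N.
Proof.
move=> Gu; rewrite sum_card_subsets_setU !big_distrr; apply: eq_bigr => S GS.
have sSX : (#|S :\: X| <= #|~: X|)%N by rewrite subset_leq_card // setDE subsetIr.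
by rewrite /= -(Gu S GS) -(cardsID X S) expnD -mulnA -expnD subnKC // mulnC.
Qed.

Lemma sum_card_setI X G :
  \sum_(S in G) #|S :&: X| = \sum_(x in X) #|[set S in G | x \in S]|.
Proof.
have cardI S : #|S :&: X| = \sum_(x in X) (x \in S).
  by rewrite -card_set_sum; apply: eq_card => x; rewrite !inE andbC.
under eq_bigr => S _ do rewrite cardI.
by rewrite exchange_big; apply: eq_bigr => x _; rewrite card_set_sum.
Qed.

Lemma card_draws_mem (x : T) r :
  #|[set S : {set T} | #|S| == r.+1 & x \in S]| = 'C(#|T|.-1, r).
Proof.
rewrite -(cardsC1 x) -cards_draws.
have notx A : A \subset [set~ x] -> x \notin A.
  by move=> sA; apply/negP=> /(subsetP sA); rewrite !inE eqxx.
have injU : {in [set A : {set T} | A \subset [set~ x] & #|A| == r] &,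
               injective (setU [set x])}.
  move=> A B; rewrite !inE => /andP[/notx xA _] /andP[/notx xB _] eqAB.
  by rewrite -(setU1K xA) -(setU1K xB) eqAB.
rewrite -(card_in_imset injU); apply: eq_card => S; rewrite !inE.
apply/andP/imsetP => [[/eqP cS xS] | [A + ->]].
  exists (S :\ x); last by rewrite setD1K.
  rewrite inE {1}setDE subsetIr /=.
  by move: cS; rewrite (cardsD1 x) xS add1n => -[->].
rewrite inE => /andP[/notx xA /eqP cA].
by rewrite cardsU1 xA cA setU11.
Qed.

Lemma expn2_leq_add_mul k m : (k <= m -> 2 ^ k <= 1 + 2 ^ m * k)%N.
Proof.
case: k => [//|k] km; apply: leq_trans (leq_addl _ _).
by rewrite (leq_trans (leq_pexp2l _ km)) ?leq_pmulr.
Qed.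

End Counting.

Local Open Scope ring_scope.

Section Hypergraph.
Variables (T : finType) (E : {set {set T}}).
Implicit Type X : {set T}.

Lemma sum_deg_le r X : uniform r E ->
  (\sum_(x in X) deg E x <= r * #|boundary E X|)%N.
Proof.
move=> Eu; rewrite -sum_card_setI /boundary card_set_sum big_distrr /=.
apply: leq_sum => e eE; case: (boolP [disjoint e & X]) => [|_].
  by rewrite -setI_eq0 => /eqP ->; rewrite cards0.
by rewrite muln1 -(Eu e eE) subset_leq_card ?subsetIl.
Qed.

Lemma card_add_boundary_le X :
  (#|E| + #|boundary E X| <= \sum_(e in E) 2 ^ #|e :&: X|)%N.
Proof.
rewrite /boundary card_set_sum -sum1_card -big_split /=; apply: leq_sum => e _.
rewrite -setI_eq0 -card_gt0; case: #|e :&: X| => [//|k] /=.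
by rewrite (leq_pexp2l (isT : (0 < 2)%N) (ltn0Sn k)).
Qed.

Lemma sum_draws_expn_setI_le r X :
  (\sum_(S in [set S : {set T} | #|S| == r.+1]) 2 ^ #|S :&: X|
   <= 'C(#|T|, r.+1) + 2 ^ r.+1 * (#|X| * 'C(#|T|.-1, r)))%N.
Proof.
set R := [set S : {set T} | #|S| == r.+1].
have -> : (#|X| * 'C(#|T|.-1, r) = \sum_(S in R) #|S :&: X|)%N.
  rewrite sum_card_setI -sum_nat_const; apply: eq_bigr => x _.
  by rewrite -(card_draws_mem x); apply: eq_card => S; rewrite !inE.
rewrite -card_draws big_distrr -sum1_card -big_split /=; apply: leq_sum => S.
by rewrite inE => /eqP cS; rewrite expn2_leq_add_mul // -cS subset_leq_card ?subsetIl.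
Qed.

Lemma uniform_card_le_bin r : uniform r E -> (#|E| <= 'C(#|T|, r))%N.
Proof.
move=> Eu; rewrite -card_draws subset_leq_card //.
by apply/subsetP => e eE; rewrite inE (Eu e eE).
Qed.

Lemma density_mul_bin r : uniform r E -> density r E * 'C(#|T|, r)%:R = #|E|%:R.
Proof.
move=> Eu; have [K0 | K0] := eqVneq 'C(#|T|, r) 0%N.
  by move: (uniform_card_le_bin Eu); rewrite K0 leqn0 => /eqP ->; rewrite /density K0 mulr0.
by rewrite /density divfK // pnatr_eq0.
Qed.

Lemma density_mul_bin_pred r :
  uniform r.+1 E -> density r.+1 E * 'C(#|T|.-1, r)%:R = avg_deg r.+1 E.
Proof.
move=> Eu; rewrite /density /avg_deg natrM.
have [K0 | K0] := eqVneq 'C(#|T|, r.+1) 0%N.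
  by move: (uniform_card_le_bin Eu); rewrite K0 leqn0 => /eqP ->; rewrite !(mul0r, mulr0).
have n0 : #|T|%:R != 0 :> rat by rewrite pnatr_eq0; apply: contra_neq K0 => ->.
have bin : #|T|%:R * 'C(#|T|.-1, r)%:R = r.+1%:R * 'C(#|T|, r.+1)%:R :> rat.
  by rewrite -!natrM mul_bin_diag.
have -> : 'C(#|T|.-1, r)%:R = r.+1%:R * 'C(#|T|, r.+1)%:R / #|T|%:R :> rat.
  by rewrite -bin mulrC mulKf.
by field; rewrite n0 pnatr_eq0 K0.
Qed.

Lemma sum_disc_setU_le r X :
  \sum_(W in powerset (~: X)) disc r E (X :|: W) <= (2 ^ #|~: X|)%:R * disc_plus r E.
Proof.
rewrite -card_powerset mulr_natl -sumr_const; apply: ler_sum => W _.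
exact: le_bigmax.
Qed.

Lemma boundary_le_disc_plus r X : uniform r.+1 E ->
  #|boundary E X|%:R
  <= (2 ^ r.+1)%:R * (disc_plus r.+1 E + avg_deg r.+1 E * #|X|%:R).
Proof.
move=> Eu; set R := [set S : {set T} | #|S| == r.+1].
have Ru : uniform r.+1 R by move=> S; rewrite inE => /eqP.
set t : rat := (2 ^ r.+1)%:R; set N : rat := (2 ^ #|~: X|)%:R.
set p := density r.+1 E.
have edges : t * \sum_(W in powerset (~: X)) (e_in E (X :|: W))%:R
    = N * (\sum_(e in E) 2 ^ #|e :&: X|)%:R.
  by rewrite -natr_sum -!natrM (sum_card_subsets_setU_uniform X Eu).
have draws : t * \sum_(W in powerset (~: X)) 'C(#|X :|: W|, r.+1)%:R
    = N * (\sum_(S in R) 2 ^ #|S :&: X|)%:R.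
  rewrite -natr_sum -!natrM -(sum_card_subsets_setU_uniform X Ru).
  congr (_ * _)%:R; apply: eq_bigr => W _.
  by rewrite -cards_draws; apply: eq_card => S; rewrite !inE andbC.
have lower := card_add_boundary_le X.
have upper := sum_draws_expn_setI_le r X.
have avg := sum_disc_setU_le r.+1 X.
rewrite /disc sumrB -mulr_sumr -/p -/N in avg.
rewrite -(ler_nat rat) natrD in lower.
rewrite -(ler_nat rat) natrD !natrM -/t in upper.
have t0 : 0 <= t by rewrite ler0n.
have N0 : 0 < N by rewrite ltr0n expn_gt0.
have p0 : 0 <= p by rewrite divr_ge0 ?ler0n.
have lowerN := ler_wpM2l (ltW N0) lower.
have avgt := ler_wpM2l t0 avg.
have upperN : p * (t * \sum_(W in powerset (~: X)) 'C(#|X :|: W|, r.+1)%:R)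
    <= N * (#|E|%:R + t * (avg_deg r.+1 E * #|X|%:R)).
  rewrite draws -(density_mul_bin Eu) -(density_mul_bin_pred Eu).
  have -> : N * (p * 'C(#|T|, r.+1)%:R + t * (p * 'C(#|T|.-1, r)%:R * #|X|%:R))
      = p * (N * ('C(#|T|, r.+1)%:R + t * (#|X|%:R * 'C(#|T|.-1, r)%:R))) by ring.
  by rewrite ler_wpM2l // ler_wpM2l // ltW.
rewrite -(ler_pM2l N0); move: edges lowerN avgt upperN; clearbody t N p; lra.
Qed.

End Hypergraph.

Theorem lemma5p2 (r : nat) (hr : (2 <= r)%N) :
  exists c1 C : rat, 0 < c1 /\ 0 < C /\
    forall (T : finType) (E : {set {set T}}) (X : {set T}),
      uniform r E ->
      (forall x, x \in X -> C * avg_deg r E <= (deg E x)%:R) ->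
      c1 * (#|boundary E X|)%:R <= disc_plus r E.
Proof.
case: r hr => [//|r] _.
exists (2 ^ r.+2)%:R^-1, (r.+1 * 2 ^ r.+2)%:R.
split; first by rewrite invr_gt0 ltr0n expn_gt0.
split; first by rewrite ltr0n muln_gt0 expn_gt0.
move=> T E X Eu Xdeg.
have t0 : 0 < (2 ^ r.+1)%:R :> rat by rewrite ltr0n expn_gt0.
rewrite expnS (natrM _ 2) ler_pdivrMl ?mulr_gt0 //.
have sum_deg : (r.+1 * 2 ^ r.+2)%:R * (avg_deg r.+1 E * #|X|%:R)
    <= (r.+1 * #|boundary E X|)%:R.
  rewrite mulrA mulr_natr -sumr_const; apply: le_trans (ler_sum _ Xdeg) _.
  by rewrite -natr_sum ler_nat sum_deg_le.
rewrite !(natrM _ r.+1) -mulrA ler_pM2l ?ltr0Sn // expnS (natrM _ 2) in sum_deg.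
have := boundary_le_disc_plus X Eu.
move: sum_deg; move: (2 ^ r.+1)%:R => t; lra.
Qed.
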